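(* Let $I$ be a set, $\lambda,\rho\colon I\to I$ bijections, and $E$ a non-trivial directed $\lambda,\rho$-weakly commutative generalized pseudo effect algebra. If the kite pseudo effect algebra $K^{\lambda,\rho}_I(E)$ satisfies RDP$_1$ and has a least non-trivial normal ideal, then $I$ is at most countable.
   Context: A generalized pseudo effect algebra (GPEA) is a structure $(E;+,0)$ with partial binary $+$ and constant $0$ such that for all $a,b,c$: (GP1) $a+b$ and $(a+b)+c$ exist iff $b+c$ and $a+(b+c)$ exist, and then they are equal; (GP2) if $a+b$ exists there are $d,e$ with $a+b=d+a=b+e$; (GP3) left and right cancellation; (GP4) $a+b=0$ implies $a=b=0$; (GP5) $a+0=0+a=a$. Non-trivial: $E\neq\{0\}$. Order: $a\le b$ iff $a+c=b$ for some $c$; for $a\le b$, $b\ominus_\ell a$ is the unique $d$ with $d+a=b$, $a\ominus_r b$ the unique $e$ with $a+e=b$. Directed: any two elements have a common upper bound. RDP$_1$: whenever $a_1+a_2=b_1+b_2$ there are $c_{11},c_{12},c_{21},c_{22}$ with $a_1=c_{11}+c_{12}$, $a_2=c_{21}+c_{22}$, $b_1=c_{11}+c_{21}$, $b_2=c_{12}+c_{22}$, such that $0\le x\le c_{12}$, $0\le y\le c_{21}$ imply $x+y=y+x$. An ideal is a non-empty subset closed under existing sums and downward closed; normal if $x+N=N+x$ for all $x$ ($x+N=\{x+y\colon y\in N,\ x+y\text{ defined}\}$, $N+x$ dually); non-trivial if $\neq\{0\}$; least non-trivial if contained in every non-trivial normal ideal. $\lambda,\rho$-weak commutativity: for all families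 $(f_j)$, $(a_i)$ in $E$ and all $i$: $f_{\rho^{-1}(i)}+a_i$ defined iff $a_i+f_{\lambda^{-1}(i)}$ defined, and $f_{\lambda^{-1}(i)}+a_i$ defined iff $a_i+f_{\rho^{-1}(i)}$ defined. Kite $K^{\lambda,\rho}_I(E)$ (a pseudo effect algebra): universe $E^I\uplus\overline E^I$, $\overline E=\{\bar a\colon a\in E\}$ a disjoint copy; $0=\langle 0\rangle$, $1=\langle\bar 0\rangle$; $\langle\bar a_i\rangle+\langle\bar b_i\rangle$ undefined; $\langle\bar a_i\colon i\in I\rangle+\langle f_j\colon j\in I\rangle=\langle\overline{f_{\rho^{-1}(i)}\ominus_r a_i}\rangle$ when $f_{\rho^{-1}(i)}\le a_i$ for all $i$; $\langle f_j\rangle+\langle\bar a_i\rangle=\langle\overline{a_i\ominus_\ell f_{\lambda^{-1}(i)}}\rangle$ when $f_{\lambda^{-1}(i)}\le a_i$ for all $i$; $\langle f_j\rangle+\langle g_j\rangle=\langle f_j+g_j\rangle$ when all coordinate sums are defined. *)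

From Stdlib Require Import Classical.

Set Implicit Arguments.

Section GPEA.
Variables (E : Type) (zero : E) (plus : E -> E -> option E).

Definition obind' {A B : Type} (o : option A) (f : A -> option B) : option B :=
  match o with Some a => f a | None => None end.

(* (GP1): a+b and (a+b)+c exist iff b+c and a+(b+c) exist, and then equal *)
Definition GP1 : Prop := forall a b c,
  obind' (plus a b) (fun ab => plus ab c) = obind' (plus b c) (fun bc => plus a bc).
Definition GP2 : Prop := forall a b s, plus a b = Some s ->
  exists d e, plus d a = Some s /\ plus b e = Some s.
Definition GP3 : Prop :=
  (forall a b c s, plus a b = Some s -> plus a c = Some s -> b = c) /\
  (forall a b c s, plus b a = Some s -> plus c a = Some s -> b = c).
Definition GP4 : Prop := forall a b, plus a b = Some zero -> a = zero /\ b = zero.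
Definition GP5 : Prop := forall a, plus a zero = Some a /\ plus zero a = Some a.

Definition is_GPEA : Prop := GP1 /\ GP2 /\ GP3 /\ GP4 /\ GP5.

Definition gle (a b : E) : Prop := exists c, plus a c = Some b.
Definition gdefined (a b : E) : Prop := exists s, plus a b = Some s.

Definition nontrivial : Prop := exists a, a <> zero.
Definition directed : Prop := forall a b, exists c, gle a c /\ gle b c.

(* lambda,rho-weak commutativity; lamI, rhoI are the inverses of lam, rho *)
Definition weakly_comm {I : Type} (lamI rhoI : I -> I) : Prop :=
  forall (f a : I -> E) (i : I),
    (gdefined (f (rhoI i)) (a i) <-> gdefined (a i) (f (lamI i))) /\
    (gdefined (f (lamI i)) (a i) <-> gdefined (a i) (f (rhoI i))).
End GPEA.

(* ---------- Partial algebras given by a sum relation  S x y z  (x+y=z) --- *)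

Section PartialAlg.
Variables (K : Type) (z0 : K) (S : K -> K -> K -> Prop).

Definition ple (x y : K) : Prop := exists c, S x c y.

Definition RDP1 : Prop := forall a1 a2 b1 b2 s, S a1 a2 s -> S b1 b2 s ->
  exists c11 c12 c21 c22,
    S c11 c12 a1 /\ S c21 c22 a2 /\ S c11 c21 b1 /\ S c12 c22 b2 /\
    (forall x y, ple z0 x -> ple x c12 -> ple z0 y -> ple y c21 ->
       exists t, S x y t /\ S y x t).

Definition ideal (N : K -> Prop) : Prop :=
  (exists x, N x) /\
  (forall x y s, N x -> N y -> S x y s -> N s) /\
  (forall x y, N y -> ple x y -> N x).

Definition normal (N : K -> Prop) : Prop :=
  forall x s, (exists y, N y /\ S x y s) <-> (exists y, N y /\ S y x s).

Definition nontrivial_set (N : K -> Prop) : Prop := exists x, N x /\ x <> z0.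

Definition least_nontrivial_normal_ideal (N : K -> Prop) : Prop :=
  ideal N /\ normal N /\ nontrivial_set N /\
  forall M, ideal M -> normal M -> nontrivial_set M -> forall x, N x -> M x.

Definition has_least_nontrivial_normal_ideal : Prop :=
  exists N, least_nontrivial_normal_ideal N.
End PartialAlg.

(* ---------- The kite K^{lam,rho}_I(E) ----------
   Universe: inl f  = <f_j> in E^I,  inr a = <bar a_i> in (bar E)^I.
   lamI, rhoI : inverses of lam, rho.  Sum given as a relation. *)

Definition kite_carrier (I E : Type) : Type := ((I -> E) + (I -> E))%type.

Definition kite_zero (I E : Type) (zero : E) : kite_carrier I E :=
  inl (fun _ => zero).

Definition kite_sum (I E : Type) (plus : E -> E -> option E) (lamI rhoI : I -> I)
  (x y z : kite_carrier I E) : Prop :=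
  match x, y, z with
  | inl f, inl g, inl h => forall i, plus (f i) (g i) = Some (h i)
  (* <bar a_i> + <f_j> = <bar (f_{rho^-1 i} -r a_i)>, i.e. f_{rho^-1 i} + c_i = a_i *)
  | inr a, inl f, inr c => forall i, plus (f (rhoI i)) (c i) = Some (a i)
  (* <f_j> + <bar a_i> = <bar (a_i -l f_{lam^-1 i})>, i.e. c_i + f_{lam^-1 i} = a_i *)
  | inl f, inr a, inr c => forall i, plus (c i) (f (lamI i)) = Some (a i)
  | _, _, _ => False
  end.

Definition at_most_countable (I : Type) : Prop :=
  exists g : I -> nat, forall x y, g x = g y -> x = y.

(** For each [j], the kite elements [<f_j>] whose support lies in the orbit
    of [j] under the permutation [lam^-1 . rho] of [I] form a non-trivial
    normal ideal. A least non-trivial normal ideal therefore contains a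
    non-zero [<f_j>] supported in every orbit, so some [i] with [f_i <> 0]
    lies in all orbits: [I] is a single orbit of a permutation, hence
    countable. *)

From Stdlib Require Import Classical ClassicalEpsilon FunctionalExtensionality
  IndefiniteDescription Arith.

Lemma iter_cancel {A : Type} (f g : A -> A) (Hgf : forall x, g (f x) = x) n x :
  Nat.iter n g (Nat.iter n f x) = x.
Proof.
  induction n as [|n IH]; [reflexivity|].
  rewrite Nat.iter_succ_r, Nat.iter_succ, Hgf. exact IH.
Qed.

Lemma at_most_countable_of_nat_surj {I : Type} (F : nat -> I) :
  (forall k, exists m, F m = k) -> at_most_countable I.
Proof.
  intros HF. destruct (functional_choice _ HF) as [g Hg].
  exists g. intros x y Hxy. rewrite <- (Hg x), <- (Hg y), Hxy. reflexivity.
Qed.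

Definition in_orbit {I : Type} (s s' : I -> I) (j k : I) : Prop :=
  exists n, Nat.iter n s j = k \/ Nat.iter n s' j = k.

Lemma in_orbit_swap {I : Type} (s s' : I -> I) j k :
  in_orbit s s' j k -> in_orbit s' s j k.
Proof. intros [n Hn]. exists n. tauto. Qed.

Lemma in_orbit_step {I : Type} (s s' : I -> I) (Hss' : forall x, s (s' x) = x) j k :
  in_orbit s s' j k -> in_orbit s s' j (s k).
Proof.
  intros [n [Hn|Hn]]; subst k.
  - exists (S n). left. reflexivity.
  - destruct n as [|m].
    + exists 1. left. reflexivity.
    + exists m. right. simpl. rewrite Hss'. reflexivity.
Qed.

Lemma orbit_countable {I : Type} (s s' : I -> I) i :
  (forall k, in_orbit s s' i k) -> at_most_countable I.
Proof.
  intros Hi.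
  apply (at_most_countable_of_nat_surj (fun m =>
    if Nat.even m then Nat.iter (Nat.div2 m) s i else Nat.iter (Nat.div2 m) s' i)).
  intros k. destruct (Hi k) as [n [Hn|Hn]].
  - exists (2 * n). rewrite Nat.even_mul, Nat.div2_double. exact Hn.
  - exists (S (2 * n)).
    rewrite Nat.even_succ, Nat.odd_mul, Nat.div2_succ_double. exact Hn.
Qed.

Section Orbit.
Context {I : Type} (s s' : I -> I).
Hypotheses (Hss' : forall x, s (s' x) = x) (Hs's : forall x, s' (s x) = x).

Lemma in_orbit_sym j k : in_orbit s s' j k -> in_orbit s s' k j.
Proof.
  intros [n [Hn|Hn]]; exists n; subst k; [right|left]; apply iter_cancel; assumption.
Qed.

Lemma in_orbit_of_image j k : in_orbit s s' j (s k) -> in_orbit s s' j k.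
Proof.
  intros H. apply in_orbit_swap.
  rewrite <- (Hs's k). apply in_orbit_step; [exact Hs's|]. apply in_orbit_swap, H.
Qed.

Lemma in_orbit_of_preimage j k : in_orbit s s' j (s' k) -> in_orbit s s' j k.
Proof. intros H. rewrite <- (Hss' k). apply in_orbit_step; assumption. Qed.

End Orbit.

Section GPEAZero.
Context {E : Type} {zero : E} {plus : E -> E -> option E}.
Hypothesis HE : is_GPEA zero plus.

Lemma plus0l_eq x s : plus zero x = Some s -> s = x.
Proof.
  destruct HE as (_ & _ & _ & _ & H5). intros H.
  rewrite (proj2 (H5 x)) in H. congruence.
Qed.

Lemma plus0r_eq x s : plus x zero = Some s -> s = x.
Proof.
  destruct HE as (_ & _ & _ & _ & H5). intros H.
  rewrite (proj1 (H5 x)) in H. congruence.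
Qed.

Lemma plus_eq_selfr c e : plus c e = Some c -> e = zero.
Proof.
  destruct HE as (_ & _ & [Hcancl _] & _ & H5). intros H.
  exact (Hcancl _ _ _ _ H (proj1 (H5 c))).
Qed.

Lemma plus_eq_selfl c d : plus d c = Some c -> d = zero.
Proof.
  destruct HE as (_ & _ & [_ Hcancr] & _ & H5). intros H.
  exact (Hcancr _ _ _ _ H (proj2 (H5 c))).
Qed.

End GPEAZero.

Section SupportIdeals.
Context {I E : Type} (zero : E).

Definition supported_in (P : I -> Prop) (x : kite_carrier I E) : Prop :=
  match x with
  | inl f => forall k, ~ P k -> f k = zero
  | inr _ => False
  end.

Lemma nontrivial_supported_in (P : I -> Prop) j :
  nontrivial zero -> P j -> nontrivial_set (kite_zero I zero) (supported_in P).
Proof.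
  intros [a Ha] Hj.
  exists (inl (fun k => if excluded_middle_informative (P k) then a else zero)).
  split.
  - simpl. intros k Hk. destruct excluded_middle_informative; tauto.
  - intros H. injection H as H. apply (f_equal (fun f => f j)) in H. simpl in H.
    destruct excluded_middle_informative; tauto.
Qed.

Lemma nonzero_supported_in_all (Ps : I -> I -> Prop) (j0 : I) x :
  x <> kite_zero I zero -> (forall j, supported_in (Ps j) x) ->
  exists i, forall j, Ps j i.
Proof.
  intros Hx0 Hx. pose proof (Hx j0) as Hj0.
  destruct x as [f|a]; [|contradiction].
  assert (Hi : exists i, f i <> zero).
  { apply NNPP. intros Hnone. apply Hx0. unfold kite_zero. f_equal.
    apply functional_extensionality. intros i.
    apply NNPP. intros Hfi. apply Hnone. exists i. exact Hfi. }
  destruct Hi as [i Hi]. exists i. intros j.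
  apply NNPP. intros Hji. exact (Hi (Hx j i Hji)).
Qed.

Context {plus : E -> E -> option E} {lam lamI rho rhoI : I -> I}.
Hypothesis HE : is_GPEA zero plus.

Notation Ksum := (kite_sum plus lamI rhoI).

Lemma ideal_supported_in P : ideal Ksum (supported_in P).
Proof.
  destruct HE as (_ & _ & _ & HGP4 & _).
  split; [|split].
  - exists (inl (fun _ => zero)). simpl. reflexivity.
  - intros [f|a] [g|b] [h|c]; simpl; try tauto.
    intros Hf Hg Hs k Hk. specialize (Hs k).
    rewrite (Hf k Hk), (Hg k Hk) in Hs. exact (plus0l_eq HE _ _ Hs).
  - intros x [g|b] Hy [[c|c] Hc]; destruct x as [f|a]; simpl in *; try tauto.
    intros k Hk. specialize (Hc k). rewrite (Hy k Hk) in Hc.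
    exact (proj1 (HGP4 _ _ Hc)).
Qed.

Hypotheses (Hlam2 : forall i, lam (lamI i) = i) (Hrho2 : forall i, rho (rhoI i) = i).

Section Normal.
Variable P : I -> Prop.
Hypotheses (HPs : forall k, P (lamI (rho k)) -> P k)
  (HPs' : forall k, P (rhoI (lam k)) -> P k).

Let GP2 : forall a b t, plus a b = Some t ->
  exists d e, plus d a = Some t /\ plus b e = Some t.
Proof. destruct HE as (_ & H & _). exact H. Qed.

Lemma left_translate_supported_in x t :
  (exists y, supported_in P y /\ Ksum x y t) ->
  (exists y, supported_in P y /\ Ksum y x t).
Proof.
  intros [[f|b] [Hy Hs]]; [|contradiction].
  destruct x as [h|a]; destruct t as [u|c]; simpl in *; try tauto.
  - destruct (functional_choice (fun i d => plus d (h i) = Some (u i)))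
      as [d Hd].
    { intros i. destruct (GP2 _ _ _ (Hs i)) as (d & _ & Hd & _). exists d. exact Hd. }
    exists (inl d). split; simpl; [|exact Hd].
    intros k Hk. specialize (Hs k). rewrite (Hy k Hk) in Hs.
    pose proof (Hd k) as H. rewrite (plus0r_eq HE _ _ Hs) in H.
    exact (plus_eq_selfl HE _ _ H).
  - destruct (functional_choice (fun i e => plus (c i) e = Some (a i)))
      as [e He].
    { intros i. destruct (GP2 _ _ _ (Hs i)) as (_ & e & _ & He). exists e. exact He. }
    exists (inl (fun k => e (lam k))). split; simpl.
    + intros k Hk. specialize (Hs (lam k)).
      rewrite (Hy (rhoI (lam k))) in Hs by (intros H; exact (Hk (HPs' k H))).
      pose proof (He (lam k)) as H. rewrite (plus0l_eq HE _ _ Hs) in H.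
      exact (plus_eq_selfr HE _ _ H).
    + intros i. rewrite Hlam2. exact (He i).
Qed.

Lemma right_translate_supported_in x t :
  (exists y, supported_in P y /\ Ksum y x t) ->
  (exists y, supported_in P y /\ Ksum x y t).
Proof.
  intros [[f|b] [Hy Hs]]; [|contradiction].
  destruct x as [h|a]; destruct t as [u|c]; simpl in *; try tauto.
  - destruct (functional_choice (fun i e => plus (h i) e = Some (u i)))
      as [e He].
    { intros i. destruct (GP2 _ _ _ (Hs i)) as (_ & e & _ & He). exists e. exact He. }
    exists (inl e). split; simpl; [|exact He].
    intros k Hk. specialize (Hs k). rewrite (Hy k Hk) in Hs.
    pose proof (He k) as H. rewrite (plus0l_eq HE _ _ Hs) in H.
    exact (plus_eq_selfr HE _ _ H).
  - destruct (functional_choice (fun i d => plus d (c i) = Some (a i)))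
      as [d Hd].
    { intros i. destruct (GP2 _ _ _ (Hs i)) as (d & _ & Hd & _). exists d. exact Hd. }
    exists (inl (fun k => d (rho k))). split; simpl.
    + intros k Hk. specialize (Hs (rho k)).
      rewrite (Hy (lamI (rho k))) in Hs by (intros H; exact (Hk (HPs k H))).
      pose proof (Hd (rho k)) as H. rewrite (plus0r_eq HE _ _ Hs) in H.
      exact (plus_eq_selfl HE _ _ H).
    + intros i. rewrite Hrho2. exact (Hd i).
Qed.

Lemma normal_supported_in : normal Ksum (supported_in P).
Proof.
  intros x t. split;
    [apply left_translate_supported_in | apply right_translate_supported_in].
Qed.

End Normal.
End SupportIdeals.

Theorem lemma4p8 (I E : Type) (zero : E) (plus : E -> E -> option E)
  (lam lamI rho rhoI : I -> I)
  (Hlam1 : forall i, lamI (lam i) = i) (Hlam2 : forall i, lam (lamI i) = i)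
  (Hrho1 : forall i, rhoI (rho i) = i) (Hrho2 : forall i, rho (rhoI i) = i)
  (HE : is_GPEA zero plus) (Hnt : nontrivial zero) (Hdir : directed plus)
  (Hwc : weakly_comm plus lamI rhoI)
  (HRDP : RDP1 (kite_zero I zero) (kite_sum plus lamI rhoI))
  (Hleast : has_least_nontrivial_normal_ideal (kite_zero I zero)
              (kite_sum plus lamI rhoI)) :
  at_most_countable I.
Proof.
  set (s := fun i => lamI (rho i)). set (s' := fun i => rhoI (lam i)).
  assert (Hss' : forall x, s (s' x) = x).
  { intros x. unfold s, s'. rewrite Hrho2, Hlam1. reflexivity. }
  assert (Hs's : forall x, s' (s x) = x).
  { intros x. unfold s, s'. rewrite Hlam2, Hrho1. reflexivity. }
  destruct Hleast as [N (_ & _ & [x [HNx Hx0]] & HNleast)].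
  destruct (classic (inhabited I)) as [[j0]|Hempty].
  2:{ exists (fun _ => 0). intros y. exfalso. exact (Hempty (inhabits y)). }
  assert (Hx : forall j, supported_in zero (in_orbit s s' j) x).
  { intros j. apply HNleast; [| | |exact HNx].
    - exact (ideal_supported_in zero HE _).
    - apply (normal_supported_in zero HE Hlam2 Hrho2).
      + exact (in_orbit_of_image s s' Hs's j).
      + exact (in_orbit_of_preimage s s' Hss' j).
    - apply (nontrivial_supported_in zero _ j Hnt). exists 0. left. reflexivity. }
  destruct (nonzero_supported_in_all zero _ j0 _ Hx0 Hx) as [i Hi].
  apply (orbit_countable s s' i). intros k. exact (in_orbit_sym s s' Hss' Hs's _ _ (Hi k)).
Qed.
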